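(* In the setting described in the context, assume that $D^pf(x)=\mathcal{C}_*$ for all $x\in\mathbb{R}^n$ (for a fixed $\mathcal{C}_*\in\mathbb{R}^{\otimes^p n}_{\mathrm{sym}}$) and that $W_k=W_*$ for all $k$, for a fixed nonsingular $W_*\in\mathbb{R}^{n\times n}$. If the vectors $W_*^{-1}s_0,\dots,W_*^{-1}s_{n-1}$ are pairwise orthogonal, then $\mathcal{C}_n=\mathcal{C}_*$.
   Context: Setting (higher-order secant update): $p\ge 2$; $f:\mathbb{R}^n\to\mathbb{R}$ is $p$ times continuously differentiable, $D^pf(x)\in\mathbb{R}^{\otimes^p n}_{\mathrm{sym}}$ denoting its $p$th derivative viewed as a symmetric multilinear map; $(x_k)_{k\ge0}$ is a sequence in $\mathbb{R}^n$ with steps $s_k = x_{k+1}-x_k \ne 0$; $(W_k)_{k\ge0}$ are nonsingular $n\times n$ matrices; $\widetilde{\mathcal{C}}_k = \int_0^1 D^pf(x_k+ts_k)\,dt$; $\mathcal{C}_0\in\mathbb{R}^{\otimes^p n}_{\mathrm{sym}}$ is arbitrary and $\mathcal{C}_{k+1}$ is the unique minimizer of $\|(\mathcal{C}-\mathcal{C}_k)[W_k]^p\|_F$ over $\mathcal{C}\in\mathbb{R}^{\otimes^p n}_{\mathrm{sym}}$ subject to $\mathcal{C}[s_k]=\widetilde{\mathcal{C}}_k[s_k]$. Notation: a $p$-tensor is a multilinear map $(\mathbb{R}^n)^p\to\mathbb{R}$; $\mathcal{T}[s]$ fixes the first argument to $s$; $(\mathcal{T}[M]^p)[s_1,\dots,s_p]=\mathcal{T}[Ms_1,\dots,Ms_p]$;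 symmetric means invariant under permutation of arguments; $\|\cdot\|_F$ is the Frobenius norm of the array of entries $\mathcal{T}[e_{i_1},\dots,e_{i_p}]$. *)

From HB Require Import structures.
From mathcomp Require Import all_boot all_order all_algebra all_fingroup.
From mathcomp Require Import all_classical all_reals all_analysis.
Set Implicit Arguments. Unset Strict Implicit. Unset Printing Implicit Defensive.
Import Order.TTheory GRing.Theory Num.Theory.
Import numFieldNormedType.Exports.
Local Open Scope classical_set_scope.
Local Open Scope ring_scope.

(* Vectors of R^n are row vectors 'rV[R]_n ; a matrix M acts as v |-> M v,
   i.e. (mapply M v) 0 i = \sum_j M i j * v 0 j. *)
Definition mapply {R : realType} {n : nat} (M : 'M[R]_n) (v : 'rV[R]_n) : 'rV[R]_n :=
  v *m M^T.

Definition evec {R : realType} {n : nat} (i : 'I_n) : 'rV[R]_n :=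
  \row_l (l == i)%:R.

Definition dotv {R : realType} {n : nat} (u v : 'rV[R]_n) : R :=
  \sum_(i < n) u 0 i * v 0 i.

(* A p-tensor on R^n, given by its array of entries T[e_{i_1},...,e_{i_p}],
   indexed by the multi-index idx : 'I_p -> 'I_n. *)
Definition tensor (R : realType) (n p : nat) :=
  {ffun {ffun 'I_p -> 'I_n} -> R}.

Definition teval {R : realType} {n p : nat} (T : tensor R n p)
  (v : 'I_p -> 'rV[R]_n) : R :=
  \sum_(idx : {ffun 'I_p -> 'I_n}) T idx * \prod_(k < p) v k 0 (idx k).

(* T[s] : the multilinear map obtained by fixing the first argument to s;
   it is represented as a function of the remaining arguments v_2,...,v_p
   (the value given to the first slot of v is ignored). *)
Definition tfix1 {R : realType} {n p : nat} (T : tensor R n p) (s : 'rV[R]_n) :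
  ('I_p -> 'rV[R]_n) -> R :=
  fun v => teval T (fun k => if val k == 0%N then s else v k).

(* T[M]^p : (T[M]^p)[s_1,...,s_p] = T[M s_1, ..., M s_p] *)
Definition ttrans {R : realType} {n p : nat} (T : tensor R n p) (M : 'M[R]_n) :
  tensor R n p :=
  [ffun idx : {ffun 'I_p -> 'I_n} =>
     teval T (fun k => mapply M (evec (idx k)))].

Definition tsym {R : realType} {n p : nat} (T : tensor R n p) : Prop :=
  forall (sigma : 'S_p) (idx : {ffun 'I_p -> 'I_n}),
    T [ffun k => idx (sigma k)] = T idx.

Definition frob {R : realType} {n p : nat} (T : tensor R n p) : R :=
  Num.sqrt (\sum_(idx : {ffun 'I_p -> 'I_n}) T idx ^+ 2).

Definition tsub {R : realType} {n p : nat} (A B : tensor R n p) : tensor R n p :=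
  [ffun idx => A idx - B idx].

Fixpoint iterp {R : realType} {n : nat} (f : 'rV[R]_n -> R) (js : seq 'I_n)
  : 'rV[R]_n -> R :=
  match js with
  | [::] => f
  | i :: js' => fun x => derive (iterp f js') x (evec i)
  end.

Definition Cp {R : realType} {n : nat} (p : nat) (f : 'rV[R]_n -> R) : Prop :=
  forall js : seq 'I_n, (size js <= p)%N ->
    continuous (iterp f js) /\
    ((size js < p)%N -> forall (i : 'I_n) (x : 'rV[R]_n),
        derivable (iterp f js) x (evec i)).

Definition Dp {R : realType} {n : nat} (p : nat) (f : 'rV[R]_n -> R)
  (x : 'rV[R]_n) : tensor R n p :=
  [ffun idx : {ffun 'I_p -> 'I_n} => iterp f [seq idx k | k <- enum 'I_p] x].

Definition Ctilde {R : realType} {n : nat} (p : nat) (f : 'rV[R]_n -> R)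
  (xk sk : 'rV[R]_n) : tensor R n p :=
  [ffun idx : {ffun 'I_p -> 'I_n} =>
     Rintegral (@lebesgue_measure R) `[0, 1]%classic
       (fun t : R => Dp p f (xk + t *: sk) idx)].

Definition is_secant_update {R : realType} {n p : nat}
  (Ck Ct : tensor R n p) (W : 'M[R]_n) (s : 'rV[R]_n) (C' : tensor R n p) : Prop :=
  [/\ tsym C', tfix1 C' s = tfix1 Ct s &
      forall C : tensor R n p, tsym C -> tfix1 C s = tfix1 Ct s ->
        frob (ttrans (tsub C' Ck) W) <= frob (ttrans (tsub C Ck) W)].

(* Write u_k = W^-1 s_k and Q_u = I - u u^T / <u,u> (orthogonal projector onto
   the complement of u).  With a constant p-th derivative C_star, the averaged
   derivative C~_k equals C_star, and the scaled error E_k = (C_k - C_star)[W]^p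
   obeys the recursion E_{k+1} = E_k[Q_{u_k}]^p: the tensor C_star + E_k pulled
   back through W Q_{u_k} W^-1 is an admissible competitor, and the defect
   H = E_{k+1} - E_k[Q_{u_k}]^p is symmetric with H[u_k] = 0, hence invariant
   under Q_{u_k} and Frobenius-orthogonal to E_k[Q_{u_k}]^p - E_k; minimality
   and Pythagoras then force H = 0.  Consequently
   E_n = E_0[Q_{u_0} ... Q_{u_{n-1}}]^p, and when u_0, ..., u_{n-1} are
   pairwise orthogonal (and nonzero) this product of projectors is the zero
   map, because such vectors form an orthogonal basis of R^n. *)

From HB Require Import structures.
From mathcomp Require Import all_boot all_order all_algebra all_fingroup.
From mathcomp Require Import all_classical all_reals all_analysis.
From mathcomp Require Import ring.
Import Order.TTheory GRing.Theory Num.Theory.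
Import numFieldNormedType.Exports.
Local Open Scope ring_scope.

Lemma Ctilde_cst {R : realType} {n p : nat} (f : 'rV[R]_n -> R)
    (Cs : tensor R n p) (xk sk : 'rV[R]_n) :
  (forall y, Dp p f y = Cs) -> Ctilde p f xk sk = Cs.
Proof.
move=> hD; apply/ffunP => idx; rewrite ffunE.
have -> : (fun t : R => Dp p f (xk + t *: sk) idx) = fun=> Cs idx.
  by apply/funext => t; rewrite hD.
rewrite Rintegral_cst; last exact: measurable_itv.
by rewrite [X in fine X]lebesgue_measure_itv /= lte_fin ltr01 /= subr0 mulr1.
Qed.

Section Vectors.
Context {R : realType} {n : nat}.
Implicit Types (u v w : 'rV[R]_n) (M : 'M[R]_n).

Lemma mapplyE M v j : mapply M v 0 j = \sum_i M j i * v 0 i.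
Proof. by rewrite /mapply mxE; apply: eq_bigr => i _; rewrite mxE mulrC. Qed.

Lemma mapply_evec M (i j : 'I_n) : mapply M (evec i) 0 j = M j i.
Proof.
rewrite mapplyE (bigD1 i) //= mxE eqxx mulr1 big1 ?addr0 // => l /negbTE hl.
by rewrite mxE hl mulr0.
Qed.

Lemma mapplyM (A B : 'M[R]_n) v : mapply (A *m B) v = mapply A (mapply B v).
Proof. by rewrite /mapply trmx_mul mulmxA. Qed.

Lemma mapply1 v : mapply 1%:M v = v.
Proof. by rewrite /mapply trmx1 mulmx1. Qed.

Lemma mapply0 M : mapply M 0 = 0.
Proof. by rewrite /mapply mul0mx. Qed.

Lemma mapplyK M v : M \in unitmx -> mapply M (mapply (invmx M) v) = v.
Proof. by move=> hM; rewrite -mapplyM mulmxV // mapply1. Qed.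

Lemma dotvC u v : dotv u v = dotv v u.
Proof. by apply: eq_bigr => i _; rewrite mulrC. Qed.

Lemma dotvBl u v w : dotv (u - v) w = dotv u w - dotv v w.
Proof. by rewrite /dotv -sumrB; apply: eq_bigr => i _; rewrite !mxE mulrBl. Qed.

Lemma dotvZl (c : R) u w : dotv (c *: u) w = c * dotv u w.
Proof. by rewrite /dotv mulr_sumr; apply: eq_bigr => i _; rewrite mxE mulrA. Qed.

Lemma dotv_suml (I : finType) (F : I -> 'rV[R]_n) w :
  dotv (\sum_i F i) w = \sum_i dotv (F i) w.
Proof.
rewrite /dotv exchange_big /=; apply: eq_bigr => l _.
by rewrite summxE mulr_suml.
Qed.

Lemma mul_tr_dotv u v : u *m v^T = (dotv u v)%:M.
Proof.
apply/matrixP => i j; rewrite !ord1 !mxE eqxx mulr1n.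
by apply: eq_bigr => l _; rewrite mxE.
Qed.

Lemma dotv_self_eq0 u : (dotv u u == 0) = (u == 0).
Proof.
apply/eqP/eqP => [h|->]; last by rewrite /dotv big1 // => i _; rewrite mxE mul0r.
apply/rowP => i; rewrite mxE.
have hge0 (l : 'I_n) : xpredT l -> 0 <= u 0 l * u 0 l by rewrite -expr2 sqr_ge0.
have /eqP := psumr_eq0P hge0 h (i := i) isT.
by rewrite mulf_eq0 orbb => /eqP.
Qed.

Definition orthproj u : 'M[R]_n := 1%:M - (dotv u u)^-1 *: (u^T *m u).

Lemma orthproj_tr u : (orthproj u)^T = orthproj u.
Proof. by rewrite /orthproj linearB /= linearZ /= trmx1 trmx_mul trmxK. Qed.

Lemma mapply_orthproj u v :
  mapply (orthproj u) v = v - (dotv v u / dotv u u) *: u.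
Proof.
rewrite /mapply orthproj_tr /orthproj mulmxBr mulmx1 -scalemxAr mulmxA.
by rewrite mul_tr_dotv mul_scalar_mx scalerA mulrC.
Qed.

Lemma orthproj_kills u : dotv u u != 0 -> mapply (orthproj u) u = 0.
Proof. by move=> hu; rewrite mapply_orthproj divff // scale1r subrr. Qed.

Section OrthogonalFamily.
Variable u : nat -> 'rV[R]_n.
Hypothesis u_nz : forall i, (i < n)%N -> dotv (u i) (u i) != 0.
Hypothesis u_orth :
  forall i j, (i < n)%N -> (j < n)%N -> i != j -> dotv (u i) (u j) = 0.

(* n nonzero pairwise orthogonal vectors form an orthogonal basis of R^n: the
   Gram matrix U U^T is diagonal and invertible, so U is invertible and a
   vector orthogonal to every u_i vanishes. *)
Lemma orth_expansion v :
  v = \sum_(i < n) (dotv v (u i) / dotv (u i) (u i)) *: u i.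
Proof.
apply/eqP; rewrite -subr_eq0; apply/eqP.
set r := v - _.
have r_orth (j : 'I_n) : dotv (u j) r = 0.
  rewrite dotvC dotvBl dotv_suml (bigD1 j) //= big1 ?addr0.
    by rewrite dotvZl mulfVK ?subrr // u_nz.
  by move=> i hij; rewrite dotvZl (@u_orth i j) ?mulr0.
pose U : 'M[R]_n := \matrix_(i < n, l < n) u i 0 l.
have hUr : U *m r^T = 0.
  apply/matrixP => i k; rewrite mxE [RHS]mxE.
  transitivity (dotv (u i) r); last exact: r_orth.
  by apply: eq_bigr => l _; rewrite !mxE (ord1 k).
have gram : U *m U^T = diag_mx (\row_i dotv (u i) (u i)).
  apply/matrixP => i j; rewrite !mxE.
  have -> : \sum_l U i l * U^T l j = dotv (u i) (u j).
    by apply: eq_bigr => l _; rewrite !mxE.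
  have [->|hij] := eqVneq i j; first by rewrite mulr1n.
  by rewrite mulr0n u_orth //; apply: contra hij => /eqP h; apply/eqP/val_inj.
have hU : U \in unitmx.
  have : \det (U *m U^T) != 0.
    by rewrite gram det_diag; apply/prodf_neq0 => i _; rewrite mxE u_nz.
  by rewrite unitmxE unitfE det_mulmx det_tr mulf_eq0 negb_or => /andP [].
have : r^T = 0 by rewrite -(mulKmx hU r^T) hUr mulmx0.
by move/(congr1 trmx); rewrite trmxK trmx0.
Qed.

Fixpoint prodproj (m : nat) : 'M[R]_n :=
  if m is m'.+1 then prodproj m' *m orthproj (u m') else 1%:M.

Lemma mapply_prodproj m v : (m <= n)%N ->
  mapply (prodproj m) v = v - \sum_(i < m) (dotv v (u i) / dotv (u i) (u i)) *: u i.
Proof.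
elim: m v => [|m IH] v hm /=; first by rewrite big_ord0 subr0 mapply1.
rewrite mapplyM IH ?(ltnW hm) // mapply_orthproj big_ord_recr /=.
have -> : \sum_(i < m) (dotv (v - (dotv v (u m) / dotv (u m) (u m)) *: u m) (u i)
            / dotv (u i) (u i)) *: u i =
          \sum_(i < m) (dotv v (u i) / dotv (u i) (u i)) *: u i.
  apply: eq_bigr => i _; rewrite dotvBl dotvZl (@u_orth m i) ?mulr0 ?subr0 //.
    exact: ltn_trans (ltn_ord i) hm.
  by rewrite neq_ltn ltn_ord orbT.
by rewrite opprD addrA addrAC.
Qed.

Lemma prodproj_full v : mapply (prodproj n) v = 0.
Proof. by rewrite mapply_prodproj // -orth_expansion subrr. Qed.

End OrthogonalFamily.
End Vectors.

Section Tensors.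
Context {R : realType} {n p : nat}.
Implicit Types (T A B H D : tensor R n p) (M : 'M[R]_n) (u : 'rV[R]_n)
  (idx : {ffun 'I_p -> 'I_n}) (v w : 'I_p -> 'rV[R]_n).

Definition tadd A B : tensor R n p := [ffun idx => A idx + B idx].

Definition tdot A B : R := \sum_idx A idx * B idx.

Lemma teval_ext T v w : (forall k, v k = w k) -> teval T v = teval T w.
Proof.
by move=> h; apply: eq_bigr => idx _; congr (_ * _); apply: eq_bigr => k _; rewrite h.
Qed.

Lemma teval_tsub A B v : teval (tsub A B) v = teval A v - teval B v.
Proof. by rewrite /teval -sumrB; apply: eq_bigr => idx _; rewrite ffunE mulrBl. Qed.

Lemma teval_tadd A B v : teval (tadd A B) v = teval A v + teval B v.
Proof. by rewrite /teval -big_split; apply: eq_bigr => idx _; rewrite ffunE mulrDl. Qed.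

Lemma teval_zero_slot T v (k0 : 'I_p) : v k0 = 0 -> teval T v = 0.
Proof.
move=> h; rewrite /teval big1 // => idx _.
by rewrite (bigD1 k0) //= h mxE mul0r mulr0.
Qed.

Lemma teval_slot T (m : 'I_p) w (c : R) (a b : 'rV[R]_n) :
  teval T (fun k => if k == m then c *: a + b else w k) =
  c * teval T (fun k => if k == m then a else w k) +
  teval T (fun k => if k == m then b else w k).
Proof.
rewrite /teval mulr_sumr -big_split; apply: eq_bigr => idx _.
have others (z : 'rV[R]_n) :
    \prod_(k | k != m) (if k == m then z else w k) 0 (idx k) =
    \prod_(k | k != m) w k 0 (idx k).
  by apply: eq_bigr => k /negbTE ->.
rewrite (bigD1 m) //= [X in _ = _ * (_ * X) + _](bigD1 m) //=.
rewrite [X in _ = _ + _ * X](bigD1 m) //= !eqxx !others !mxE; ring.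
Qed.

Lemma teval_evec T (idx : {ffun 'I_p -> 'I_n}) :
  teval T (fun k => evec (idx k)) = T idx.
Proof.
rewrite /teval (bigD1 idx) //= big1 ?mulr1; last by move=> k _; rewrite mxE eqxx.
rewrite big1 ?addr0 // => jdx hj.
have [k hk] : exists k, jdx k != idx k.
  apply/existsP; apply: contraNT hj => /existsPn h.
  by apply/eqP/ffunP => k; apply/eqP; have := h k; rewrite negbK.
by rewrite (bigD1 k) //= mxE (negbTE hk) mul0r mulr0.
Qed.

Lemma teval_ttrans T M v : teval (ttrans T M) v = teval T (fun k => mapply M (v k)).
Proof.
rewrite /teval.
under eq_bigr do rewrite ffunE /teval mulr_suml.
rewrite exchange_big /=; apply: eq_bigr => jdx _.
under eq_bigr do rewrite -mulrA.
rewrite -mulr_sumr; congr (_ * _).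
transitivity (\prod_(k < p) \sum_(i < n) M (jdx k) i * v k 0 i); last first.
  by apply: eq_bigr => k _; rewrite mapplyE.
rewrite bigA_distr_bigA /=; apply: eq_bigr => idx _.
by rewrite -big_split /=; apply: eq_bigr => k _; rewrite mapply_evec.
Qed.

Lemma ttrans1 T : ttrans T 1%:M = T.
Proof.
apply/ffunP => idx; rewrite ffunE -teval_evec; apply: teval_ext => k.
by rewrite mapply1.
Qed.

Lemma ttrans_comp T (A B : 'M[R]_n) : ttrans (ttrans T A) B = ttrans T (A *m B).
Proof.
apply/ffunP => idx; rewrite !ffunE teval_ttrans; apply: teval_ext => k.
by rewrite mapplyM.
Qed.

Lemma ttrans_tsub A B M : ttrans (tsub A B) M = tsub (ttrans A M) (ttrans B M).
Proof. by apply/ffunP => idx; rewrite !ffunE teval_tsub. Qed.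

Lemma ttrans_annihilated T M idx :
  (0 < p)%N -> (forall y : 'rV[R]_n, mapply M y = 0) -> ttrans T M idx = 0.
Proof. by move=> p0 hM; rewrite ffunE (@teval_zero_slot _ _ (Ordinal p0)). Qed.

Lemma tfix1_ttrans T M u v :
  tfix1 (ttrans T M) u v = tfix1 T (mapply M u) (fun k => mapply M (v k)).
Proof. by rewrite /tfix1 teval_ttrans; apply: teval_ext => k; case: ifP. Qed.

Lemma tfix1_tsub A B u v : tfix1 (tsub A B) u v = tfix1 A u v - tfix1 B u v.
Proof. exact: teval_tsub. Qed.

Lemma tfix1_0 T v : (0 < p)%N -> tfix1 T 0 v = 0.
Proof. by move=> p0; apply: (@teval_zero_slot _ _ (Ordinal p0)). Qed.

Lemma teval_perm T (s : 'S_p) v : tsym T -> teval T (fun k => v (s k)) = teval T v.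
Proof.
move=> hT; rewrite /teval.
have hinj : injective (fun jdx : {ffun 'I_p -> 'I_n} => [ffun k => jdx (s k)]).
  move=> a b /ffunP h; apply/ffunP => k.
  by have := h (s^-1 k)%g; rewrite !ffunE permKV.
rewrite (reindex_inj hinj) /=; apply: eq_bigr => jdx _.
rewrite hT; congr (_ * _).
rewrite (reindex_inj (@perm_inj _ s^-1)) /=; apply: eq_bigr => k _.
by rewrite ffunE !permKV.
Qed.

Lemma tsym_ttrans T M : tsym T -> tsym (ttrans T M).
Proof.
move=> hT s idx; rewrite !ffunE -(teval_perm _ s (fun k => mapply M (evec (idx k))) hT).
by apply: teval_ext => k; rewrite ffunE.
Qed.

Lemma tsym_tsub A B : tsym A -> tsym B -> tsym (tsub A B).
Proof. by move=> hA hB s idx; rewrite !ffunE hA hB. Qed.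

Lemma tsym_tadd A B : tsym A -> tsym B -> tsym (tadd A B).
Proof. by move=> hA hB s idx; rewrite !ffunE hA hB. Qed.

Lemma tdotC A B : tdot A B = tdot B A.
Proof. by apply: eq_bigr => idx _; rewrite mulrC. Qed.

Lemma tdotBr H A B : tdot H (tsub A B) = tdot H A - tdot H B.
Proof. by rewrite /tdot -sumrB; apply: eq_bigr => idx _; rewrite ffunE mulrBr. Qed.

Lemma tdot_ttrans T A M : tdot (ttrans T M) A = tdot T (ttrans A M^T).
Proof.
rewrite /tdot.
under eq_bigr do rewrite ffunE /teval mulr_suml.
rewrite exchange_big /=.
under [RHS]eq_bigr => jdx _ do rewrite ffunE /teval mulr_sumr.
apply: eq_big => // jdx _; apply: eq_big => // idx _.
rewrite -mulrA; congr (_ * _); rewrite mulrC; congr (_ * _).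
by apply: eq_bigr => k _; rewrite !mapply_evec mxE.
Qed.

Lemma frob_orth_eq0 H D :
  tdot H D = 0 -> frob (tadd H D) <= frob D -> forall idx, H idx = 0.
Proof.
move=> hHD; rewrite /frob ler_sqrt; last by apply: sumr_ge0 => idx _; exact: sqr_ge0.
have -> : \sum_idx tadd H D idx ^+ 2 =
          \sum_idx H idx ^+ 2 + \sum_idx D idx ^+ 2 + tdot H D *+ 2.
  rewrite /tdot -sumrMnl -!big_split; apply: eq_bigr => idx _ /=; rewrite ffunE; ring.
rewrite hHD mul0rn addr0 gerDr => hle.
have hH0 : \sum_idx H idx ^+ 2 = 0.
  by apply/eqP; rewrite eq_le hle; apply: sumr_ge0 => idx _; exact: sqr_ge0.
move=> idx; have /eqP := psumr_eq0P (fun i _ => sqr_ge0 (H i)) hH0 (i := idx) isT.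
by rewrite sqrf_eq0 => /eqP.
Qed.

Lemma teval_vanish H u (m : 'I_p) w :
  tsym H -> (forall v, tfix1 H u v = 0) ->
  teval H (fun k => if k == m then u else w k) = 0.
Proof.
move=> hs hu.
have p0 : (0 < p)%N by apply: leq_ltn_trans (ltn_ord m).
pose o0 : 'I_p := Ordinal p0.
rewrite -(teval_perm _ (tperm o0 m) _ hs).
rewrite -(hu (fun k => if tperm o0 m k == m then u else w (tperm o0 m k))).
apply: teval_ext => k; symmetry; case: ifP => [/eqP hk|//].
have -> : k = o0 by apply: val_inj.
by rewrite tpermL eqxx.
Qed.

(* Such a tensor is invariant under the projector Q_u: each argument changes
   by a multiple of u, which contributes nothing. *)
Lemma ttrans_orthproj H u :
  tsym H -> (forall v, tfix1 H u v = 0) -> dotv u u != 0 ->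
  ttrans H (orthproj u) = H.
Proof.
move=> hs hu hd.
suff hm m v : teval H (fun k => if (k < m)%N then mapply (orthproj u) (v k) else v k)
              = teval H v.
  apply/ffunP => idx; rewrite ffunE -[RHS]teval_evec -(hm p (fun k => evec (idx k))).
  by apply: teval_ext => k; rewrite ltn_ord.
elim: m => [|m IH]; first by apply: teval_ext.
have [hmp|hpm] := ltnP m p; last first.
  rewrite -IH; apply: teval_ext => k.
  by rewrite ltnS (leq_trans (ltnW (ltn_ord k)) hpm) (leq_trans (ltn_ord k) hpm).
pose mo : 'I_p := Ordinal hmp.
pose w (k : 'I_p) := if (k < m)%N then mapply (orthproj u) (v k) else v k.
pose c := dotv (v mo) u / dotv u u.
transitivity (teval H (fun k => if k == mo then (- c) *: u + v mo else w k)).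
  apply: teval_ext => k; rewrite /w.
  have [->|hk] := eqVneq k mo; first by rewrite /= ltnSn mapply_orthproj scaleNr addrC.
  rewrite ltnS leq_eqVlt; suff -> : (val k == m) = false by [].
  by apply/negbTE; apply: contra hk => /eqP hk'; apply/eqP/val_inj.
rewrite teval_slot teval_vanish // mulr0 add0r -IH; apply: teval_ext => k.
by have [->|//] := eqVneq k mo; rewrite /w /= ltnn.
Qed.

Lemma tdot_orthproj_defect H F u :
  tsym H -> (forall v, tfix1 H u v = 0) -> dotv u u != 0 ->
  tdot H (tsub (ttrans F (orthproj u)) F) = 0.
Proof.
move=> hs hu hd.
by rewrite tdotBr tdotC tdot_ttrans orthproj_tr ttrans_orthproj // tdotC subrr.
Qed.

Lemma secant_step_error {Ck Ck1 Cs : tensor R n p} {W : 'M[R]_n} {s : 'rV[R]_n} :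
  (0 < p)%N -> W \in unitmx -> tsym Ck -> tsym Cs ->
  dotv (mapply (invmx W) s) (mapply (invmx W) s) != 0 ->
  is_secant_update Ck Cs W s Ck1 ->
  ttrans (tsub Ck1 Cs) W =
  ttrans (ttrans (tsub Ck Cs) W) (orthproj (mapply (invmx W) s)).
Proof.
move=> p0 hW hsymk hsyms hu [hsym1 hfeas hmin].
set u := mapply (invmx W) s.
set F := ttrans (tsub Ck Cs) W; set G := ttrans (tsub Ck1 Cs) W.
set FQ := ttrans F (orthproj u).
have hWu : mapply W u = s by rewrite mapplyK.
(* The competitor C_star + (C_k - C_star)[W Q_u W^-1]^p. *)
pose Cc := tadd Cs (ttrans (tsub Ck Cs) (W *m orthproj u *m invmx W)).
have Cc_sym : tsym Cc by apply/tsym_tadd/tsym_ttrans/tsym_tsub.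
have Cc_feas : tfix1 Cc s = tfix1 Cs s.
  apply/funext => v; rewrite /tfix1 teval_tadd teval_ttrans.
  rewrite [X in _ + X](@teval_zero_slot _ _ (Ordinal p0)) ?addr0 //=.
  by rewrite !mapplyM -/u orthproj_kills // mapply0.
have Cc_err : ttrans (tsub Cc Ck) W = tsub FQ F.
  have -> : tsub Cc Ck = tsub (ttrans (tsub Ck Cs) (W *m orthproj u *m invmx W))
                              (tsub Ck Cs).
    by apply/ffunP => idx; rewrite !ffunE; ring.
  by rewrite ttrans_tsub ttrans_comp mulmxKV // -ttrans_comp.
have Ck1_err : ttrans (tsub Ck1 Ck) W = tadd (tsub G FQ) (tsub FQ F).
  have -> : tsub Ck1 Ck = tsub (tsub Ck1 Cs) (tsub Ck Cs).
    by apply/ffunP => idx; rewrite !ffunE; ring.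
  by rewrite ttrans_tsub; apply/ffunP => idx; rewrite !ffunE; ring.
have defect_sym : tsym (tsub G FQ).
  by apply: tsym_tsub; do ?apply: tsym_ttrans; exact: tsym_tsub.
have defect_u v : tfix1 (tsub G FQ) u v = 0.
  rewrite tfix1_tsub /G tfix1_ttrans tfix1_tsub hWu hfeas subrr.
  by rewrite /FQ tfix1_ttrans orthproj_kills // tfix1_0 // subrr.
have := hmin Cc Cc_sym Cc_feas; rewrite Ck1_err Cc_err => hle.
have defect0 := frob_orth_eq0 _ _ (tdot_orthproj_defect _ F _ defect_sym defect_u hu) hle.
apply/ffunP => idx; apply/eqP; rewrite -subr_eq0.
by have := defect0 idx; rewrite ffunE => ->.
Qed.

End Tensors.

Theorem mainTheorem4 (R : realType) (n p : nat) (f : 'rV[R]_n -> R)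
  (x : nat -> 'rV[R]_n) (W : nat -> 'M[R]_n) (C : nat -> tensor R n p)
  (Cstar : tensor R n p) (Wstar : 'M[R]_n) :
  (2 <= p)%N ->
  Cp p f ->
  (forall k, x k.+1 - x k != 0) ->
  (forall k, W k \in unitmx) ->
  tsym (C 0%N) ->
  (forall k, is_secant_update (C k) (Ctilde p f (x k) (x k.+1 - x k)) (W k)
                (x k.+1 - x k) (C k.+1)) ->
  tsym Cstar ->
  (forall y, Dp p f y = Cstar) ->
  Wstar \in unitmx ->
  (forall k, W k = Wstar) ->
  (forall i j : 'I_n, i != j ->
     dotv (mapply (invmx Wstar) (x i.+1 - x i))
          (mapply (invmx Wstar) (x j.+1 - x j)) = 0) ->
  C n = Cstar.
Proof.
move=> hp _ hs _ hC0 hsec hCs hD hWs hW horth.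
have p0 : (0 < p)%N by exact: leq_trans hp.
pose u k := mapply (invmx Wstar) (x k.+1 - x k).
have hsec' k : is_secant_update (C k) Cstar Wstar (x k.+1 - x k) (C k.+1).
  by move: (hsec k); rewrite (Ctilde_cst _ _ _ _ hD) hW.
have hsym k : tsym (C k) by elim: k => // k _; case: (hsec' k).
have u_nz k : dotv (u k) (u k) != 0.
  rewrite dotv_self_eq0; apply: contra (hs k) => /eqP hu.
  by rewrite -(mapplyK Wstar (x k.+1 - x k) hWs) -/(u k) hu mapply0.
have u_orth i j : (i < n)%N -> (j < n)%N -> i != j -> dotv (u i) (u j) = 0.
  by move=> hi hj; exact: (horth (Ordinal hi) (Ordinal hj)).
have err m : ttrans (tsub (C m) Cstar) Wstar =
             ttrans (ttrans (tsub (C 0%N) Cstar) Wstar) (prodproj u m).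
  elim: m => [|m IH] /=; first by rewrite ttrans1.
  by rewrite (secant_step_error p0 hWs (hsym m) hCs (u_nz m) (hsec' m)) IH ttrans_comp.
have errn : tsub (C n) Cstar =
            ttrans (tsub (C 0%N) Cstar) (Wstar *m prodproj u n *m invmx Wstar).
  by rewrite -!ttrans_comp -err ttrans_comp mulmxV // ttrans1.
apply/ffunP => idx; apply/eqP; rewrite -subr_eq0.
move/ffunP/(_ idx): errn; rewrite ffunE => ->.
by rewrite ttrans_annihilated // => y; rewrite !mapplyM (prodproj_full _ (fun i _ => u_nz i) u_orth) mapply0.
Qed.
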